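(* Let $\Sigma$ be a set of exclusion atoms and $x|y$ an exclusion atom. If $\Sigma\vdash x|y$, then $\Sigma\models x|y$.
   Context: A team $T$ is a finite set of assignments $s:\mathcal{V}\to M$, where $\mathcal{V}$ is a set of variables and $M$ a set of values. Letters $x,y,z,u,v,w,\dots$ denote finite tuples of variables; juxtaposition $xy$ denotes concatenation of tuples, and for $x=\langle x_1,\dots,x_n\rangle$, $s(x)=\langle s(x_1),\dots,s(x_n)\rangle$. An exclusion atom is an expression $x|y$ with $|x|=|y|$ (equal lengths), and $T\models x|y$ iff for all $s_1,s_2\in T$, $s_1(x)\neq s_2(y)$. For a set $\Sigma$ of atoms, $\Sigma\models x|y$ means every team satisfying all atoms of $\Sigma$ satisfies $x|y$. $\Sigma\vdash x|y$ means $x|y$ is derivable from $\Sigma$ using the following rules (schemata over arbitrary tuples of variables, with all atoms well-formed, i.e. both sides of equal length): (E1) $x|x\vdash y|z$; (E2) $x|y\vdash y|x$; (E3) $x|y\vdash xu|yv$; (E4) $xuu|yvv\vdash xu|yv$; (E5) $xyz|uvw\vdash xzy|uwv$ where $|x|=|u|$ and $|y|=|v|$; (E6) $xw|yw\vdash zz|xy$. *)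

From Stdlib Require Import List.
Import ListNotations.

(* An exclusion atom x|y is a pair of tuples (lists) of variables. *)
Definition atom (V : Type) : Type := (list V * list V)%type.

Definition wf {V : Type} (a : atom V) : Prop := length (fst a) = length (snd a).

Definition app_tuple {V M : Type} (s : V -> M) (x : list V) : list M := map s x.

(* A team is a finite set of assignments, represented by a list. *)
Definition team (V M : Type) : Type := list (V -> M).

Definition sat {V M : Type} (T : team V M) (a : atom V) : Prop :=
  forall s1 s2, In s1 T -> In s2 T -> app_tuple s1 (fst a) <> app_tuple s2 (snd a).

Definition entails {V : Type} (Sigma : atom V -> Prop) (a : atom V) : Prop :=
  forall (M : Type) (T : team V M), (forall b, Sigma b -> sat T b) -> sat T a.

Inductive derivable {V : Type} (Sigma : atom V -> Prop) : atom V -> Prop :=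
| D_hyp : forall a, Sigma a -> wf a -> derivable Sigma a
| E1 : forall x y z,
    derivable Sigma (x, x) -> wf (y, z) -> derivable Sigma (y, z)
| E2 : forall x y,
    derivable Sigma (x, y) -> wf (x, y) -> derivable Sigma (y, x)
| E3 : forall x y u v,
    derivable Sigma (x, y) -> wf (x, y) -> wf (x ++ u, y ++ v) ->
    derivable Sigma (x ++ u, y ++ v)
| E4 : forall x y u v,
    derivable Sigma (x ++ u ++ u, y ++ v ++ v) -> wf (x ++ u ++ u, y ++ v ++ v) ->
    wf (x ++ u, y ++ v) -> derivable Sigma (x ++ u, y ++ v)
| E5 : forall x y z u v w,
    length x = length u -> length y = length v ->
    derivable Sigma (x ++ y ++ z, u ++ v ++ w) -> wf (x ++ y ++ z, u ++ v ++ w) ->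
    wf (x ++ z ++ y, u ++ w ++ v) -> derivable Sigma (x ++ z ++ y, u ++ w ++ v)
| E6 : forall x y z w,
    derivable Sigma (x ++ w, y ++ w) -> wf (x ++ w, y ++ w) ->
    wf (z ++ z, x ++ y) -> derivable Sigma (z ++ z, x ++ y).

(* The only rules
   that are not mere rearrangements of tuples are E1, whose premise [x|x] holds
   only in the empty team, and E6: if [s1(zz) = s2(xy)] then [s2(x) = s2(y)], so
   the pair [s2, s2] violates the premise [xw|yw]. *)

From Stdlib Require Import List Lia.
Import ListNotations.

Lemma app_inj_length {A : Type} (a b c d : list A) :
  length a = length c -> a ++ b = c ++ d -> a = c /\ b = d.
Proof.
  revert c; induction a as [|h a IH]; intros [|h' c] Hlen Heq; simpl in *;
    try discriminate; auto.
  injection Heq as -> Heq.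
  destruct (IH c (f_equal pred Hlen) Heq) as [-> ->]; auto.
Qed.

Section TeamSemantics.

Variables V M : Type.
Implicit Types (T : team V M) (s : V -> M) (x y z u v w : list V).

Lemma app_tuple_app_eq s1 s2 x u y v :
  length x = length y ->
  app_tuple s1 (x ++ u) = app_tuple s2 (y ++ v) <->
  app_tuple s1 x = app_tuple s2 y /\ app_tuple s1 u = app_tuple s2 v.
Proof.
  intros Hlen; unfold app_tuple; rewrite !map_app; split.
  - apply app_inj_length; rewrite !length_map; exact Hlen.
  - intros [-> ->]; reflexivity.
Qed.

Lemma sat_diag_nil T x : sat T (x, x) -> T = [].
Proof.
  destruct T as [|s T]; intros Hsat; [reflexivity|].
  exfalso; apply (Hsat s s); simpl; auto.
Qed.

Lemma sat_nil (a : atom V) : sat ([] : team V M) a.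
Proof. intros s1 s2 []. Qed.

Lemma sat_sym T x y : sat T (x, y) -> sat T (y, x).
Proof. intros Hsat s1 s2 H1 H2 Heq; exact (Hsat s2 s1 H2 H1 (eq_sym Heq)). Qed.

Lemma sat_app T x y u v :
  length x = length y -> sat T (x, y) -> sat T (x ++ u, y ++ v).
Proof.
  intros Hxy Hsat s1 s2 H1 H2 Heq%app_tuple_app_eq; [|exact Hxy].
  exact (Hsat s1 s2 H1 H2 (proj1 Heq)).
Qed.

Lemma sat_contract T x y u v :
  length x = length y -> length u = length v ->
  sat T (x ++ u ++ u, y ++ v ++ v) -> sat T (x ++ u, y ++ v).
Proof.
  intros Hxy Huv Hsat s1 s2 H1 H2 [Ex Eu]%app_tuple_app_eq; [|exact Hxy].
  apply (Hsat s1 s2 H1 H2).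
  apply app_tuple_app_eq; [exact Hxy|].
  split; [exact Ex|].
  apply app_tuple_app_eq; auto.
Qed.

Lemma sat_swap T x y z u v w :
  length x = length u -> length y = length v -> length z = length w ->
  sat T (x ++ y ++ z, u ++ v ++ w) -> sat T (x ++ z ++ y, u ++ w ++ v).
Proof.
  intros Hxu Hyv Hzw Hsat s1 s2 H1 H2 [Ex Ezy]%app_tuple_app_eq; [|exact Hxu].
  apply app_tuple_app_eq in Ezy as [Ez Ey]; [|exact Hzw].
  apply (Hsat s1 s2 H1 H2).
  apply app_tuple_app_eq; [exact Hxu|].
  split; [exact Ex|].
  apply app_tuple_app_eq; auto.
Qed.

Lemma sat_dup_excl T x y z w :
  length x = length y -> length z = length x ->
  sat T (x ++ w, y ++ w) -> sat T (z ++ z, x ++ y).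
Proof.
  intros Hxy Hzx Hsat s1 s2 H1 H2 [Ex Ey]%app_tuple_app_eq; [|exact Hzx].
  apply (Hsat s2 s2 H2 H2).
  apply app_tuple_app_eq; [exact Hxy|].
  split; [congruence | reflexivity].
Qed.

End TeamSemantics.

Theorem derivable_entails (V : Type) (Sigma : atom V -> Prop) (a : atom V) :
  derivable Sigma a -> entails Sigma a.
Proof.
  induction 1; intros M T HT; unfold wf in *; simpl in *; rewrite ?length_app in *.
  - exact (HT a H).
  - rewrite (sat_diag_nil _ _ T x (IHderivable M T HT)); apply sat_nil.
  - exact (sat_sym _ _ T x y (IHderivable M T HT)).
  - exact (sat_app _ _ T x y u v H0 (IHderivable M T HT)).
  - apply sat_contract; [lia | lia | exact (IHderivable M T HT)].
  - apply sat_swap; [lia | lia | lia | exact (IHderivable M T HT)].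
  - apply (sat_dup_excl _ _ T x y z w); [lia | lia | exact (IHderivable M T HT)].
Qed.

Theorem lemma1 (V : Type) (Sigma : atom V -> Prop) (x y : list V) :
  (forall b, Sigma b -> wf b) -> wf (x, y) ->
  derivable Sigma (x, y) -> entails Sigma (x, y).
Proof.
  intros _ _ Hder; exact (derivable_entails V Sigma (x, y) Hder).
Qed.
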